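(* Let $\mathcal{T}=(\mathcal{V},\mathcal{E})$ be a grid of depth $d$ obeying the LC-PF model and covariance assumption of the context, with zero-mean Gaussian injection deviations. Let $r_{\max},x_{\max}$ be the maximum line resistance and reactance, and set $k_2=\max(r_{\max}^2,x_{\max}^2)\max_{c}\big(\Omega_p(c,c)+\Omega_q(c,c)+2\Omega_{pq}(c,c)\big)$, the inner maximum being over non-root nodes $c$. Then every diagonal entry of the voltage magnitude covariance matrix satisfies $\Omega_v(a,a)\le d^2|\mathcal{V}|k_2$.
   Context: $\mathcal{T}=(\mathcal{V},\mathcal{E})$ is a tree with a distinguished root (substation) of degree one. Its depth $d$ is the maximum number of edges on a path from the root. Each edge $(ab)$ has resistance $r_{ab}>0$ and reactance $x_{ab}>0$. Let $H_{1/r},H_{1/x}$ be the weighted Laplacians with edge weights $1/r_{ab}$, $1/x_{ab}$, with the root row and column removed. Non-root nodes have random injections $p_a,q_a$. The LC-PF model gives the voltage magnitude deviations $v=H_{1/r}^{-1}p+H_{1/x}^{-1}q$ at non-root nodes, and $\Omega_v$ is the covariance matrix of $v$. Covariance assumption: $\Omega_p,\Omega_q$ are the covariances of $p,q$, and $\Omega_{pq}=\mathbb{E}[(p-\mathbb{E}p)(q-\mathbb{E}q)^T]=\Omega_{qp}^T$. For distinct non-root $a,b$, $\Omega_p(a,b)=\Omega_q(a,b)=\Omega_{qp}(a,b)=0$, and $\Omega_{qp}(a,a)\ge0$. *)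

From HB Require Import structures.
From mathcomp Require Import all_boot all_order all_algebra.
From mathcomp Require Import all_classical all_reals all_analysis.
Set Implicit Arguments. Unset Strict Implicit. Unset Printing Implicit Defensive.
Import Order.TTheory GRing.Theory Num.Theory.
Local Open Scope classical_set_scope.
Local Open Scope ring_scope.

(* Vertices of the grid are 'I_n.+1; the root (substation) is ord0 and the
   non-root nodes are the lift ord0 i, i : 'I_n. *)

Definition nonroot {n : nat} (i : 'I_n) : 'I_n.+1 := lift ord0 i.

(* a tree: connected, with exactly n (undirected) edges on n.+1 vertices
   (edges counted as ordered pairs, hence 2 * n) *)
Definition is_tree (n : nat) (e : rel 'I_n.+1) : Prop :=
  [/\ symmetric e, irreflexive e, (forall u v, connect e u v) &
      #|[set uv : 'I_n.+1 * 'I_n.+1 | e uv.1 uv.2]| = (2 * n)%N].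

Definition root_degree_one (n : nat) (e : rel 'I_n.+1) : Prop :=
  #|[set u | e ord0 u]| = 1%N.

Definition depth (n : nat) (e : rel 'I_n.+1) (dd : nat) : Prop :=
  (forall v, exists s, [/\ path e ord0 s, last ord0 s = v & (size s <= dd)%N]) /\
  (exists v, forall s, path e ord0 s -> last ord0 s = v -> (dd <= size s)%N).

Definition laplacian (R : ringType) (n : nat) (e : rel 'I_n.+1)
  (w : 'I_n.+1 -> 'I_n.+1 -> R) : 'M[R]_n.+1 :=
  \matrix_(a, b) (if a == b then \sum_(u | e a u) w a u
                  else if e a b then - w a b else 0).

Definition red_laplacian (R : ringType) (n : nat) (e : rel 'I_n.+1)
  (w : 'I_n.+1 -> 'I_n.+1 -> R) : 'M[R]_n :=
  \matrix_(i, j) laplacian e w (nonroot i) (nonroot j).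

Definition line_max (R : realDomainType) (n : nat) (e : rel 'I_n.+1)
  (r : 'I_n.+1 -> 'I_n.+1 -> R) : R :=
  \big[Num.max/0]_(ab : 'I_n.+1 * 'I_n.+1 | e ab.1 ab.2) r ab.1 ab.2.

(* LC-PF: v = H_{1/r}^{-1} p + H_{1/x}^{-1} q (as random variables) *)
Definition lcpf_v (R : realType) (T : Type) (n : nat) (e : rel 'I_n.+1)
  (r x : 'I_n.+1 -> 'I_n.+1 -> R) (p q : 'I_n -> T -> R) (a : 'I_n) : T -> R :=
  fun t => \sum_(c < n)
     (invmx (red_laplacian e (fun u w => (r u w)^-1)) a c * p c t +
      invmx (red_laplacian e (fun u w => (x u w)^-1)) a c * q c t).

Definition centered_gaussian (d : measure_display) (T : measurableType d)
  (R : realType) (P : probability T R) (Z : T -> R) : Prop :=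
  (exists s : R, 0 < s /\
     forall A : set R, measurable A -> P (Z @^-1` A) = normal_prob 0 s A) \/
  (forall A : set R, measurable A -> P (Z @^-1` A) = @dirac _ R 0 R A).

(* (p, q) is a zero-mean jointly Gaussian vector: every linear combination
   of its entries is a centered Gaussian *)
Definition jointly_centered_gaussian (d : measure_display) (T : measurableType d)
  (R : realType) (P : probability T R) (n : nat) (p q : 'I_n -> T -> R) : Prop :=
  forall wp wq : 'I_n -> R,
    centered_gaussian P (fun t => \sum_(c < n) (wp c * p c t + wq c * q c t)).

From HB Require Import structures.
From mathcomp Require Import all_boot all_order all_algebra.
From mathcomp Require Import all_classical all_reals all_analysis.
From mathcomp.algebra_tactics Require Import ring lra.
Set Implicit Arguments. Unset Strict Implicit. Unset Printing Implicit Defensive.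
Import Order.TTheory GRing.Theory Num.Theory.
Local Open Scope ring_scope.

(* Let G = H^-1 for the reduced Laplacian H with conductances 1/rho, where rho
   is r or x.  Twice the quadratic form of H is the Dirichlet energy of the
   extension by 0 at the root, so the column G(., c) has energy 2 G(c, c).
   Along a simple path of at most d lines from the root to c, G(c, c) is the sum
   of the increments of that column, and Cauchy-Schwarz bounds its square by the
   resistance of the path (at most d rho_max) times half the energy; hence
   0 <= G(c, c) <= d rho_max, and Cauchy-Schwarz for the energy gives
   G(a, c)^2 <= G(a, a) G(c, c) <= (d rho_max)^2.
   The summands G_r(a, c) p_c + G_x(a, c) q_c of v_a are uncorrelated, so
   Var v_a is the sum of their variances, and each is at most
   d^2 max(r_max, x_max)^2 (Var p_c + Var q_c + 2 Cov(p_c, q_c)) because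
   Cov(p_c, q_c) >= 0. *)

Lemma weighted_cauchy_schwarz (R : realDomainType) (I : Type) (s : seq I)
    (w a b : I -> R) : (forall i, 0 <= w i) ->
  (\sum_(i <- s) w i * a i * b i) ^+ 2 <=
  (\sum_(i <- s) w i * a i ^+ 2) * (\sum_(i <- s) w i * b i ^+ 2).
Proof.
move=> w_ge0.
set A := \sum_(i <- s) w i * a i ^+ 2; set B := \sum_(i <- s) w i * b i ^+ 2.
set C := \sum_(i <- s) w i * a i * b i.
have AB : A * B = \sum_(i <- s) \sum_(j <- s) (w i * a i ^+ 2) * (w j * b j ^+ 2).
  by rewrite /A /B big_distrlr.
have BA : A * B = \sum_(i <- s) \sum_(j <- s) (w j * a j ^+ 2) * (w i * b i ^+ 2).
  by rewrite mulrC /A /B big_distrlr; do 2![apply: eq_bigr => ? _]; exact: mulrC.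
have CC : C ^+ 2 = \sum_(i <- s) \sum_(j <- s) (w i * a i * b i) * (w j * a j * b j).
  by rewrite expr2 /C big_distrlr.
have lagrange : 2 * (A * B - C ^+ 2) =
    \sum_(i <- s) \sum_(j <- s) w i * w j * (a i * b j - a j * b i) ^+ 2.
  rewrite (_ : 2 * _ = A * B + A * B - 2 * C ^+ 2); last by ring.
  rewrite {1}AB BA CC mulr_sumr -big_split -sumrB; apply: eq_bigr => i _.
  by rewrite mulr_sumr -big_split -sumrB; apply: eq_bigr => j _ /=; ring.
have : 0 <= 2 * (A * B - C ^+ 2).
  rewrite lagrange; apply: sumr_ge0 => i _; apply: sumr_ge0 => j _.
  by rewrite mulr_ge0 ?sqr_ge0 ?mulr_ge0.
by rewrite pmulr_rge0 // subr_ge0.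
Qed.

Section DirichletForm.
Variables (R : comRingType) (n : nat) (e : rel 'I_n.+1) (w : 'I_n.+1 -> 'I_n.+1 -> R).
Hypotheses (e_sym : symmetric e) (e_irr : irreflexive e) (w_sym : forall a b, w a b = w b a).

Definition ext_root (f : 'I_n -> R) (a : 'I_n.+1) : R :=
  if unlift ord0 a is Some i then f i else 0.

Lemma ext_root0 f : ext_root f ord0 = 0.
Proof. by rewrite /ext_root unlift_none. Qed.

Lemma ext_root_lift f i : ext_root f (lift ord0 i) = f i.
Proof. by rewrite /ext_root liftK. Qed.

Definition edge_weight (a b : 'I_n.+1) : R := if e a b then w a b else 0.

Lemma edge_weightC a b : edge_weight a b = edge_weight b a.
Proof. by rewrite /edge_weight e_sym w_sym. Qed.

(* The sum runs over ordered pairs, so every line is counted twice. *)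
Definition dirichlet (F G : 'I_n.+1 -> R) : R :=
  \sum_a \sum_b edge_weight a b * (F a - F b) * (G a - G b).

Lemma laplacian_mulE a G :
  \sum_b laplacian e w a b * G b = \sum_b edge_weight a b * (G a - G b).
Proof.
have lapE b : laplacian e w a b = (a == b)%:R * \sum_u edge_weight a u - edge_weight a b.
  rewrite mxE /edge_weight big_mkcond /=; case: eqP => [<-|_]; first by rewrite e_irr subr0 mul1r.
  by rewrite mul0r sub0r; case: (e a b); rewrite ?oppr0.
under eq_bigr do rewrite lapE mulrBl.
rewrite sumrB [X in X - _](bigD1 a) //= eqxx mul1r [X in _ + X - _]big1 ?addr0; last first.
  by move=> b; rewrite eq_sym => /negPf ->; rewrite !mul0r.
by rewrite mulr_suml -sumrB; apply: eq_bigr => b _; rewrite mulrBr mulrC.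
Qed.

Lemma dirichletE F G :
  dirichlet F G = 2 * \sum_a F a * \sum_b edge_weight a b * (G a - G b).
Proof.
have swap : \sum_a \sum_b edge_weight a b * F b * (G a - G b) =
    - \sum_a \sum_b edge_weight a b * F a * (G a - G b).
  rewrite exchange_big -sumrN; apply: eq_bigr => a _; rewrite -sumrN.
  by apply: eq_bigr => b _; rewrite edge_weightC -mulrN opprB.
transitivity (\sum_a \sum_b edge_weight a b * F a * (G a - G b)
              - \sum_a \sum_b edge_weight a b * F b * (G a - G b)).
  rewrite -sumrB; apply: eq_bigr => a _; rewrite -sumrB; apply: eq_bigr => b _ /=; ring.
rewrite swap opprK -mulr2n mulr_natl; congr (_ *+ 2); apply: eq_bigr => a _.
by rewrite mulr_sumr; apply: eq_bigr => b _; ring.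
Qed.

Lemma red_laplacian_dirichlet f g :
  2 * \sum_i f i * \sum_j red_laplacian e w i j * g j = dirichlet (ext_root f) (ext_root g).
Proof.
rewrite dirichletE big_ord_recl ext_root0 mul0r add0r; congr (2 * _).
apply: eq_bigr => i _; rewrite ext_root_lift -laplacian_mulE big_ord_recl ext_root0 mulr0 add0r.
by congr (_ * _); apply: eq_bigr => j _; rewrite ext_root_lift mxE.
Qed.

Lemma red_laplacian_tr : (red_laplacian e w)^T = red_laplacian e w.
Proof.
apply/matrixP => i j; rewrite !mxE.
by case: eqVneq => [->|_] //; rewrite e_sym w_sym.
Qed.

End DirichletForm.

Section PathEdges.
Variable T : eqType.

Definition path_edges (x : T) (s : seq T) : seq (T * T) := zip (x :: s) s.

Lemma path_edges_cons x y s : path_edges x (y :: s) = (x, y) :: path_edges y s.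
Proof. by []. Qed.

Lemma size_path_edges x s : size (path_edges x s) = size s.
Proof. by rewrite size_zip /= minnC; apply/minn_idPl. Qed.

Lemma path_edges_rel (e : rel T) x s :
  path e x s -> {in path_edges x s, forall p, e p.1 p.2}.
Proof.
elim: s x => [|y s IH] x //= /andP[exy ys] p.
by rewrite path_edges_cons in_cons => /predU1P[-> //|]; apply: IH.
Qed.

Lemma telescope_path_edges (V : zmodType) (F : T -> V) x s :
  F x - F (last x s) = \sum_(p <- path_edges x s) (F p.1 - F p.2).
Proof.
elim: s x => [|y s IH] x /=; first by rewrite big_nil subrr.
by rewrite path_edges_cons big_cons -IH /= addrA subrK.
Qed.

(* Each undirected edge of the path occurs twice in the double sum, once per orientation. *)
Lemma sum_path_edges_le (R : realDomainType) (Psi : T -> T -> R) x s :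
  (forall a b, 0 <= Psi a b) -> (forall a b, Psi a b = Psi b a) ->
  2 * \sum_(p <- path_edges x s) Psi p.1 p.2 <= \sum_(a <- x :: s) \sum_(b <- x :: s) Psi a b.
Proof.
move=> Psi_ge0 Psi_sym; elim: s x => [|y s IH] x.
  by rewrite big_nil mulr0 sumr_ge0 // => a _; rewrite sumr_ge0.
have expand : \sum_(a <- x :: y :: s) \sum_(b <- x :: y :: s) Psi a b =
    \sum_(b <- x :: y :: s) Psi x b + \sum_(a <- y :: s) Psi a x
    + \sum_(a <- y :: s) \sum_(b <- y :: s) Psi a b.
  by rewrite big_cons -addrA -big_split; congr (_ + _); apply: eq_bigr => a _; rewrite big_cons.
have Pxy : Psi x y <= \sum_(b <- x :: y :: s) Psi x b.
  by rewrite !big_cons addrCA lerDl addr_ge0 //; apply: sumr_ge0 => b _.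
have Pyx : Psi y x <= \sum_(a <- y :: s) Psi a x.
  by rewrite big_cons lerDl; apply: sumr_ge0 => a _.
rewrite path_edges_cons big_cons /= expand; rewrite Psi_sym in Pyx; have := IH y; lra.
Qed.
End PathEdges.

Section PositiveWeights.
Variables (R : realFieldType) (n : nat) (e : rel 'I_n.+1) (w : 'I_n.+1 -> 'I_n.+1 -> R).
Hypotheses (e_sym : symmetric e) (e_irr : irreflexive e).
Hypotheses (w_sym : forall a b, w a b = w b a) (w_gt0 : forall a b, e a b -> 0 < w a b).

Local Notation edge_weight := (edge_weight e w).
Local Notation dirichlet := (dirichlet e w).

Lemma edge_weight_ge0 a b : 0 <= edge_weight a b.
Proof. by rewrite /edge_weight; case: ifP => // /w_gt0/ltW. Qed.

Lemma dirichletE_pairs F G :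
  dirichlet F G = \sum_(ab : 'I_n.+1 * 'I_n.+1)
                    edge_weight ab.1 ab.2 * (F ab.1 - F ab.2) * (G ab.1 - G ab.2).
Proof. by rewrite /dirichlet pair_bigA. Qed.

Lemma dirichlet_sqrE F :
  dirichlet F F = \sum_a \sum_b edge_weight a b * (F a - F b) ^+ 2.
Proof. by do 2![apply: eq_bigr => ? _]; rewrite -mulrA -expr2. Qed.

Let dirichlet_term_ge0 F a b : 0 <= edge_weight a b * (F a - F b) ^+ 2.
Proof. by rewrite mulr_ge0 ?edge_weight_ge0 ?sqr_ge0. Qed.

Lemma dirichlet_ge0 F : 0 <= dirichlet F F.
Proof.
by rewrite dirichlet_sqrE; apply: sumr_ge0 => a _; apply: sumr_ge0 => b _.
Qed.

Lemma dirichlet_eq0 F : dirichlet F F = 0 -> forall a b, e a b -> F a = F b.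
Proof.
rewrite dirichlet_sqrE => /psumr_eq0P-/(_ (fun a _ => sumr_ge0 _ (fun b _ => _))) F0 a b eab.
have /psumr_eq0P/(_ b isT) : \sum_b edge_weight a b * (F a - F b) ^+ 2 = 0 by exact: F0.
rewrite /edge_weight eab => /(_ (fun b _ => dirichlet_term_ge0 F a b)) /eqP.
by rewrite mulf_eq0 gt_eqF ?w_gt0 //= sqrf_eq0 subr_eq0 => /eqP.
Qed.

Lemma dirichlet_cauchy_schwarz F G : dirichlet F G ^+ 2 <= dirichlet F F * dirichlet G G.
Proof.
have sqE (X : 'I_n.+1 * 'I_n.+1 -> R) :
    \sum_ab edge_weight ab.1 ab.2 * X ab * X ab = \sum_ab edge_weight ab.1 ab.2 * X ab ^+ 2.
  by apply: eq_bigr => ab _; rewrite -mulrA -expr2.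
rewrite !dirichletE_pairs (sqE (fun ab => F ab.1 - F ab.2)) (sqE (fun ab => G ab.1 - G ab.2)).
exact: weighted_cauchy_schwarz _ _ _ (fun ab => edge_weight_ge0 ab.1 ab.2).
Qed.

Variable M : R.
Hypothesis w_inv_le : forall a b, e a b -> (w a b)^-1 <= M.

Lemma path_resistance_le x s : path e x s ->
  \sum_(p <- path_edges x s) (w p.1 p.2)^-1 <= (size s)%:R * M.
Proof.
move=> /path_edges_rel xs_edges.
have -> : (size s)%:R * M = \sum_(p <- path_edges x s) M.
  by rewrite big_const_seq count_predT iter_addr_0 size_path_edges mulr_natl.
by rewrite !big_seq; apply: ler_sum => p /xs_edges /w_inv_le.
Qed.

Lemma path_energy_le F x s : uniq (x :: s) ->
  2 * \sum_(p <- path_edges x s) edge_weight p.1 p.2 * (F p.1 - F p.2) ^+ 2 <= dirichlet F F.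
Proof.
move=> xs_uniq.
have sub_le (G : 'I_n.+1 -> R) : (forall a, 0 <= G a) -> \sum_(a <- x :: s) G a <= \sum_a G a.
  by move=> G_ge0; rewrite big_uniq // [leRHS](bigID (mem (x :: s))) /= lerDl sumr_ge0.
apply: le_trans (sum_path_edges_le x s (dirichlet_term_ge0 F) _) _ => [a b|].
  by rewrite edge_weightC // -opprB sqrrN.
rewrite dirichlet_sqrE; apply: le_trans (sub_le _ _) _ => [a|]; first exact: sumr_ge0.
by apply: ler_sum => a _; apply: sub_le.
Qed.

Lemma dirichlet_path_le F x s : path e x s -> uniq (x :: s) ->
  2 * (F x - F (last x s)) ^+ 2 <= (size s)%:R * M * dirichlet F F.
Proof.
move=> xs_path xs_uniq; set l := path_edges x s.
have ewK p : p \in l -> edge_weight p.1 p.2 * (w p.1 p.2)^-1 = 1.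
  by move=> /(path_edges_rel xs_path) ep; rewrite /edge_weight ep mulfV // gt_eqF ?w_gt0.
have := weighted_cauchy_schwarz l (fun p => (w p.1 p.2)^-1) (fun p => F p.1 - F p.2)
  (fun p => edge_weight_ge0 p.1 p.2).
have -> : \sum_(p <- l) edge_weight p.1 p.2 * (w p.1 p.2)^-1 * (F p.1 - F p.2) =
    F x - F (last x s).
  by rewrite telescope_path_edges; apply: eq_big_seq => p /ewK ->; rewrite mul1r.
have -> : \sum_(p <- l) edge_weight p.1 p.2 * (w p.1 p.2)^-1 ^+ 2 = \sum_(p <- l) (w p.1 p.2)^-1.
  by apply: eq_big_seq => p /ewK; rewrite expr2 mulrA => ->; rewrite mul1r.
have A_le := path_resistance_le xs_path; have B_le := path_energy_le F xs_uniq.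
set A := \sum_(p <- l) _ in A_le *; set B := \sum_(p <- l) _ in B_le *.
have A_ge0 : 0 <= A.
  by rewrite /A big_seq; apply: sumr_ge0 => p /(path_edges_rel xs_path)/w_gt0/ltW; rewrite invr_ge0.
have B_ge0 : 0 <= B by apply: sumr_ge0 => p _; exact: dirichlet_term_ge0.
have := dirichlet_ge0 F; nra.
Qed.

Hypothesis e_conn : forall u v, connect e u v.
Local Notation H := (red_laplacian e w).

Lemma red_laplacian_unit : H \in unitmx.
Proof.
rewrite unitmxE unitfE; apply/det0P => -[v /negP v_neq0 vH]; apply: v_neq0.
pose f i := v 0 i.
have Hf i : \sum_j H i j * f j = 0.
  transitivity ((v *m H) 0 i); last by rewrite vH mxE.
  rewrite mxE; apply: eq_bigr => j _.
  by rewrite mulrC -{1}(red_laplacian_tr e_sym w_sym) mxE.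
have : dirichlet (ext_root f) (ext_root f) = 0.
  by rewrite -red_laplacian_dirichlet // big1 ?mulr0 // => i _; rewrite Hf mulr0.
move=> /dirichlet_eq0 f_const; apply/eqP/rowP => i; rewrite mxE.
have f_closed : fingraph.closed e [pred a | ext_root f a == 0].
  by move=> a b /f_const; rewrite !inE => ->.
have := closed_connect f_closed (e_conn ord0 (lift ord0 i)).
by rewrite !inE ext_root0 ext_root_lift eqxx => /esym/eqP.
Qed.

Local Notation G := (invmx H).

Lemma invmx_red_laplacian_dirichlet a c :
  2 * G a c = dirichlet (ext_root (fun i => G i a)) (ext_root (fun i => G i c)).
Proof.
rewrite -red_laplacian_dirichlet //; congr (2 * _).
have -> : \sum_i G i a * \sum_j H i j * G j c = (G^T *m (H *m G)) a c.
  by rewrite mxE; apply: eq_bigr => i _; rewrite !mxE.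
by rewrite trmx_inv red_laplacian_tr // mulKmx // red_laplacian_unit.
Qed.

Lemma invmx_red_laplacian_diag_le (dd : nat) c s : 0 <= M ->
  path e ord0 s -> last ord0 s = nonroot c -> (size s <= dd)%N -> 0 <= G c c <= dd%:R * M.
Proof.
move=> M_ge0 s_path; have G_ge0 : 0 <= G c c.
  by have := dirichlet_ge0 (ext_root (fun i => G i c)); rewrite -invmx_red_laplacian_dirichlet; lra.
rewrite G_ge0 /=; case: (shortenP s_path) => s' s'_path s'_uniq s'_sub s'_last s_size.
have s'_size : (size s' <= dd)%N.
  by apply: leq_trans s_size; apply: uniq_leq_size s'_sub; case/andP: s'_uniq.
have := dirichlet_path_le (ext_root (fun i => G i c)) s'_path s'_uniq.
rewrite s'_last ext_root0 ext_root_lift sub0r sqrrN -invmx_red_laplacian_dirichlet.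
rewrite -(ler_nat R) in s'_size => bound.
have dM_ge0 : 0 <= dd%:R * M by rewrite mulr_ge0.
have : 0 <= (dd%:R - (size s')%:R) * M * G c c by rewrite !mulr_ge0 // subr_ge0.
nra.
Qed.

Lemma invmx_red_laplacian_sqr_le (dd : nat) a c : 0 <= M ->
  (forall v, exists s, [/\ path e ord0 s, last ord0 s = v & (size s <= dd)%N]) ->
  G a c ^+ 2 <= (dd%:R * M) ^+ 2.
Proof.
move=> M_ge0 depth_dd.
have diag_le b : 0 <= G b b <= dd%:R * M.
  by have [s [s_path s_last s_size]] := depth_dd (nonroot b);
    exact: invmx_red_laplacian_diag_le M_ge0 s_path s_last s_size.
have /andP[Gaa_ge0 Gaa_le] := diag_le a; have /andP[Gcc_ge0 Gcc_le] := diag_le c.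
have := dirichlet_cauchy_schwarz (ext_root (fun i => G i a)) (ext_root (fun i => G i c)).
rewrite -!invmx_red_laplacian_dirichlet; nra.
Qed.

End PositiveWeights.

Lemma invmx_red_laplacian_resistance_sqr_le (R : realFieldType) (n : nat) (e : rel 'I_n.+1)
    (rho : 'I_n.+1 -> 'I_n.+1 -> R) (dd : nat) (a c : 'I_n) :
  symmetric e -> irreflexive e -> (forall u v, connect e u v) ->
  (forall u v, rho u v = rho v u) -> (forall u v, e u v -> 0 < rho u v) ->
  (forall v, exists s, [/\ path e ord0 s, last ord0 s = v & (size s <= dd)%N]) ->
  invmx (red_laplacian e (fun u v => (rho u v)^-1)) a c ^+ 2 <=
    dd%:R ^+ 2 * line_max e rho ^+ 2.
Proof.
move=> e_sym e_irr e_conn rho_sym rho_gt0 depth_dd; rewrite -exprMn.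
apply: invmx_red_laplacian_sqr_le depth_dd => //.
- by move=> u v; rewrite rho_sym.
- by move=> u v /rho_gt0; rewrite invr_gt0.
- by move=> u v euv; rewrite invrK; apply/bigmax_geP; right; exists (u, v).
- by apply/bigmax_geP; left.
Qed.

Lemma quadratic_form2_le (R : realDomainType) (a b D u v c : R) :
  a ^+ 2 <= D -> b ^+ 2 <= D -> 0 <= u -> 0 <= v -> 0 <= c ->
  a ^+ 2 * u + b ^+ 2 * v + 2 * (a * b) * c <= D * (u + v + 2 * c).
Proof. by move=> aD bD u_ge0 v_ge0 c_ge0; have := sqr_ge0 (a - b); nra. Qed.

Section Covariance.
Context d (T : measurableType d) (R : realType) (P : probability T R).
Local Notation L2 := (Lfun P 2%:E).
Local Open Scope ereal_scope.

Lemma Lfun2_sum (I : Type) (s : seq I) (X : I -> T -> R) :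
  (forall i, X i \in L2) -> (\sum_(i <- s) X i)%R \in L2.
Proof. by move=> X2; apply: rpred_sum => *; rewrite ?lee1n. Qed.

Lemma Lfun2_scale (a : R) (X : T -> R) : X \in L2 -> (a \o* X)%R \in L2.
Proof. by apply: Lfun_scale; rewrite ler1n. Qed.

Lemma Lfun2_lincomb (a b : R) (X Y : T -> R) :
  X \in L2 -> Y \in L2 -> (a \o* X \+ b \o* Y)%R \in L2.
Proof. by move=> X2 Y2; apply: rpredD => *; rewrite ?lee1n ?Lfun2_scale. Qed.

Lemma covarianceZl_L2 a (X Y : T -> R) : X \in L2 -> Y \in L2 ->
  covariance P (a \o* X)%R Y = a%:E * covariance P X Y.
Proof.
move=> X2 Y2; have Pfin := fin_num_measure P _ measurableT.
by rewrite covarianceZl ?Lfun2_mul_Lfun1 ?Lfun_subset12.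
Qed.

Lemma covarianceZr_L2 a (X Y : T -> R) : X \in L2 -> Y \in L2 ->
  covariance P X (a \o* Y)%R = a%:E * covariance P X Y.
Proof. by move=> X2 Y2; rewrite covarianceC covarianceZl_L2 // covarianceC. Qed.

Lemma covariance_sumr (I : Type) (s : seq I) (X : T -> R) (Y : I -> T -> R) :
  X \in L2 -> (forall i, Y i \in L2) ->
  covariance P X (\sum_(i <- s) Y i)%R = \sum_(i <- s) covariance P X (Y i).
Proof.
move=> X2 Y2; elim: s => [|i s IH]; first by rewrite !big_nil covariance_cst_r.
by rewrite !big_cons covarianceDr ?Lfun2_sum // IH.
Qed.

Lemma variance_sum_uncorrelated (I : eqType) (s : seq I) (X : I -> T -> R) :
  uniq s -> (forall i, X i \in L2) ->
  (forall i j, i != j -> covariance P (X i) (X j) = 0) ->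
  'V_P[(\sum_(i <- s) X i)%R] = \sum_(i <- s) 'V_P[X i].
Proof.
move=> + X2 X_uncorr; elim: s => [_|i s IH /= /andP[i_notin s_uniq]].
  by rewrite !big_nil variance_cst.
have uncorr : \sum_(j <- s) covariance P (X i) (X j) = 0.
  by rewrite big1_seq // => j /andP[_ j_in]; apply: X_uncorr; apply: contraNneq i_notin => ->.
by rewrite !big_cons varianceD ?Lfun2_sum // covariance_sumr // uncorr mule0 adde0 IH.
Qed.

Lemma covariance_lincomb_eq0 (a b a' b' : R) (X1 X2 Z1 Z2 : T -> R) :
  X1 \in L2 -> X2 \in L2 -> Z1 \in L2 -> Z2 \in L2 ->
  covariance P X1 Z1 = 0 -> covariance P X1 Z2 = 0 ->
  covariance P X2 Z1 = 0 -> covariance P X2 Z2 = 0 ->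
  covariance P (a \o* X1 \+ b \o* X2)%R (a' \o* Z1 \+ b' \o* Z2)%R = 0.
Proof.
move=> X1_2 X2_2 Z1_2 Z2_2 c11 c12 c21 c22.
have W_uncorr X : X \in L2 -> covariance P X Z1 = 0 -> covariance P X Z2 = 0 ->
    covariance P X (a' \o* Z1 \+ b' \o* Z2)%R = 0.
  move=> X_2 cX1 cX2.
  by rewrite covarianceDr ?Lfun2_scale // !covarianceZr_L2 // cX1 cX2 !mule0 adde0.
rewrite covarianceDl ?Lfun2_scale ?Lfun2_lincomb // !covarianceZl_L2 ?Lfun2_lincomb //.
by rewrite !W_uncorr // !mule0 adde0.
Qed.

Lemma variance_lincomb (a b : R) (X Y : T -> R) : X \in L2 -> Y \in L2 ->
  'V_P[(a \o* X \+ b \o* Y)%R] =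
    (a ^+ 2 * fine 'V_P[X] + b ^+ 2 * fine 'V_P[Y] + 2 * (a * b) * fine (covariance P X Y))%:E.
Proof.
move=> X2 Y2; have Pfin := fin_num_measure P _ measurableT.
rewrite varianceD ?Lfun2_scale // !varianceZ // covarianceZl_L2 ?Lfun2_scale // covarianceZr_L2 //.
rewrite -(fineK (variance_fin_num X2)) -(fineK (variance_fin_num Y2)).
have XY1 := Lfun2_mul_Lfun1 X2 Y2.
rewrite -(fineK (covariance_fin_num (Lfun_subset12 Pfin X2) (Lfun_subset12 Pfin Y2) XY1)).
by rewrite -!EFinM -!EFinD /=; congr EFin; ring.
Qed.

Lemma variance_sum_lincomb_le (n : nat) (p q : 'I_n -> T -> R) (alpha beta : 'I_n -> R)
    (D : R) :
  (forall c, p c \in L2 /\ q c \in L2) ->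
  (forall c c', c != c' -> [/\ covariance P (p c) (p c') = 0,
     covariance P (q c) (q c') = 0 & covariance P (q c) (p c') = 0]) ->
  (forall c, 0 <= covariance P (q c) (p c)) ->
  (forall c, alpha c ^+ 2 <= D)%R -> (forall c, beta c ^+ 2 <= D)%R ->
  'V_P[(\sum_(c < n) (alpha c \o* p c \+ beta c \o* q c))%R] <=
    (n%:R * D * \big[Num.max/0]_(c < n)
       (fine 'V_P[p c] + fine 'V_P[q c] + 2 * fine (covariance P (p c) (q c))))%R%:E.
Proof.
move=> pq_L2 pq_uncorr qp_ge0 alpha_le beta_le; set K := \big[Num.max/0%R]_(c < n) _.
have Y_L2 c : (alpha c \o* p c \+ beta c \o* q c)%R \in L2.
  by have [? ?] := pq_L2 c; exact: Lfun2_lincomb.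
have Y_uncorr c c' : c != c' -> covariance P (alpha c \o* p c \+ beta c \o* q c)%R
                                   (alpha c' \o* p c' \+ beta c' \o* q c')%R = 0.
  move=> cc'; have [[? ?] [? ?]] := (pq_L2 c, pq_L2 c').
  have [pp qq qp] := pq_uncorr c c' cc'; move: (cc'); rewrite eq_sym => /pq_uncorr[_ _ pq].
  by apply: covariance_lincomb_eq0; rewrite // covarianceC.
rewrite variance_sum_uncorrelated ?index_enum_uniq //.
have term_le c : 'V_P[(alpha c \o* p c \+ beta c \o* q c)%R] <= (D * K)%:E.
  have [p_L2 q_L2] := pq_L2 c; rewrite variance_lincomb // lee_fin.
  apply: le_trans (quadratic_form2_le (alpha_le c) (beta_le c) _ _ _) _.
  - exact/fine_ge0/variance_ge0.
  - exact/fine_ge0/variance_ge0.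
  - by rewrite fine_ge0 // covarianceC.
  rewrite ler_wpM2l ?(le_trans (sqr_ge0 _) (alpha_le c)) //.
  exact: le_bigmax (fun c => _) c.
apply: le_trans (lee_sum _ (fun c _ => term_le c)) _.
by rewrite sumEFin lee_fin sumr_const card_ord -mulrA mulr_natl.
Qed.

End Covariance.

Lemma lcpf_vE (R : realType) (T : Type) (n : nat) (e : rel 'I_n.+1)
    (r x : 'I_n.+1 -> 'I_n.+1 -> R) (p q : 'I_n -> T -> R) (a : 'I_n) :
  lcpf_v e r x p q a =
    (\sum_(c < n) (invmx (red_laplacian e (fun u v => (r u v)^-1)) a c \o* p c
                   \+ invmx (red_laplacian e (fun u v => (x u v)^-1)) a c \o* q c))%R.
Proof.
apply/funext => t; rewrite fct_sumE; apply: eq_bigr => c _.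
by rewrite /= [p c t * _]mulrC [q c t * _]mulrC.
Qed.

Theorem theorem11 (R : realType) (d : measure_display) (T : measurableType d)
  (P : probability T R) (n : nat) (e : rel 'I_n.+1) (dd : nat)
  (r x : 'I_n.+1 -> 'I_n.+1 -> R) (p q : 'I_n -> {RV P >-> R}) :
  is_tree e -> root_degree_one e -> depth e dd ->
  (forall a b, e a b -> 0 < r a b /\ 0 < x a b) ->
  (forall a b, r a b = r b a /\ x a b = x b a) ->
  jointly_centered_gaussian P (fun c => p c : T -> R) (fun c => q c : T -> R) ->
  (forall c, (p c : T -> R) \in Lfun P 2%:E /\ (q c : T -> R) \in Lfun P 2%:E) ->
  (forall a b, a != b ->
     [/\ covariance P (p a) (p b) = 0%E, covariance P (q a) (q b) = 0%E
       & covariance P (q a) (p b) = 0%E]) ->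
  (forall a, (0 <= covariance P (q a) (p a))%E) ->
  let rmax := line_max e r in
  let xmax := line_max e x in
  let k2 := Num.max (rmax ^+ 2) (xmax ^+ 2) *
     \big[Num.max/0]_(c < n) (fine 'V_P[p c] + fine 'V_P[q c]
                              + 2 * fine (covariance P (p c) (q c))) in
  forall a : 'I_n,
    ('V_P[lcpf_v e r x (fun c => p c : T -> R) (fun c => q c : T -> R) a]
       <= ((dd ^ 2 * n.+1)%:R * k2)%:E)%E.
Proof.
move=> [e_sym e_irr e_conn _] _ [depth_dd _] rx_gt0 rx_sym _ pq_L2 pq_uncorr qp_ge0.
move=> rmax xmax k2 a.
have [r_gt0 x_gt0] : (forall u v, e u v -> 0 < r u v) /\ (forall u v, e u v -> 0 < x u v).
  by split=> u v /rx_gt0[].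
have [r_sym x_sym] : (forall u v, r u v = r v u) /\ (forall u v, x u v = x v u).
  by split=> u v; case: (rx_sym u v).
pose D := dd%:R ^+ 2 * Num.max (rmax ^+ 2) (xmax ^+ 2).
have D_ge0 : 0 <= D by rewrite mulr_ge0 ?exprn_ge0 ?le_max ?sqr_ge0.
rewrite lcpf_vE.
apply: le_trans (variance_sum_lincomb_le (D := D) pq_L2 pq_uncorr qp_ge0 _ _) _.
- move=> c; apply: le_trans (invmx_red_laplacian_resistance_sqr_le a c
    e_sym e_irr e_conn r_sym r_gt0 depth_dd) _.
  by rewrite ler_wpM2l ?exprn_ge0 // le_max lexx.
- move=> c; apply: le_trans (invmx_red_laplacian_resistance_sqr_le a c
    e_sym e_irr e_conn x_sym x_gt0 depth_dd) _.
  by rewrite ler_wpM2l ?exprn_ge0 // le_max lexx orbT.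
pose K := \big[Num.max/0]_(c < n) (fine 'V_P[p c] + fine 'V_P[q c]
                                   + 2 * fine (covariance P (p c) (q c))).
rewrite lee_fin natrM natrX /k2 (_ : _ * (_ * K) = n.+1%:R * D * K); last by rewrite /D; ring.
rewrite ler_wpM2r ?ler_wpM2r ?ler_nat //.
by apply/bigmax_geP; left.
Qed.
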